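(* Let $k\ge 2$, $c\ge 1$, $s\ge t\ge 2$ be integers, let $G_{r_s}$ be a connected $k$-uniform rooted hypergraph with root $r_s$, and let $H=G_c(s,t)$ with $\mathbf{x}=\mathbf{x}(H)$. Then $\sigma(V'(H^{u_s}))+x_{u_s}>\sigma(V'(H_{u_{s+1}}))+x_{u_{s+1}}$ and $\sigma(V'(H^{u_s}))\ge \sigma(V'(H_{u_s}))$.
   Context: Hypergraphs are $k$-uniform (every edge has $k$ vertices); for a connected hypergraph $G$, $d_G(u,v)$ is the length of a shortest path, $D(G)=(d_G(u,v))$, $\rho(G)$ is the largest eigenvalue of $D(G)$, and $\mathbf{x}(G)$ is the unique positive unit eigenvector of $D(G)$ for $\rho(G)$; $x_v$ is its entry at $v$ and $\sigma(X)$ the sum of its entries over $X\subseteq V(G)$. The loose path $P^k_{s+t}=(u_0,e_1,u_1,\dots,e_{s+t},u_{s+t})$ is the $k$-uniform hypertree with $s+t$ edges in which $u_1,\dots,u_{s+t-1}$ have degree $2$ and all other vertices degree $1$. $S^k_c$ is the $k$-uniform hyperstar with $c$ edges sharing a common center. $G_c(s,t)$ is obtained from $P^k_{s+t}$ by identifying, for each $i\in\{1,\dots,s+t-1\}\setminus\{s\}$, the center of a disjoint copy of $S^k_c$ with $u_i$, and identifying the root $r_s$ of a disjoint copy of $G_{r_s}$ with $u_s$. For $0\le i\le s+t$, $G_{u_i}$ denotes the subhypergraph consisting of $u_i$ together with the hypergraph attached at $u_i$ (just $\{u_i\}$ if nothing is attached). For an edge $e$, $H-e$ is the hypergraph with the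 same vertices and edge $e$ removed. $H^{u_i}$ is the connected component of $H-e_{i+1}$ containing $u_0$, and $H_{u_i}$ is the connected component of $H-e_i$ containing $u_{s+t}$; $V'(H^{u_i})=V(H^{u_i})\setminus V(G_{u_i})$ and $V'(H_{u_i})=V(H_{u_i})\setminus V(G_{u_i})$. *)

From HB Require Import structures.
From mathcomp Require Import all_boot all_order all_algebra.
Set Implicit Arguments. Unset Strict Implicit. Unset Printing Implicit Defensive.
Import Order.TTheory GRing.Theory Num.Theory.

Section Hyper.
Variable T : finType.

Definition adj (E : {set {set T}}) : rel T :=
  fun x y => [exists e in E, (x \in e) && (y \in e)].

Definition uniform (k : nat) (E : {set {set T}}) : Prop :=
  forall e, e \in E -> #|e| = k.

Definition hconnected (V : {set T}) (E : {set {set T}}) : Prop :=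
  forall x y, x \in V -> y \in V -> connect (adj E) x y.

Fixpoint nstep (E : {set {set T}}) (u v : T) (m : nat) : bool :=
  match m with
  | 0 => u == v
  | m'.+1 => [exists w, adj E u w && nstep E w v m']
  end.

Definition dist (E : {set {set T}}) (u v : T) : nat :=
  \big[minn/#|T|]_(m < #|T|.+1 | nstep E u v m) m.

Definition component (E : {set {set T}}) (u : T) : {set T} :=
  [set v | connect (adj E) u v].

Variable R : rcfType.
Local Open Scope ring_scope.

Definition dist_eigen_eq (V : {set T}) (E : {set {set T}}) (lam : R)
  (y : T -> R) : Prop :=
  forall v, v \in V -> \sum_(w in V) (dist E v w)%:R * y w = lam * y v.

Definition dist_eigenvalue (V : {set T}) (E : {set {set T}}) (lam : R) : Prop :=
  exists y : T -> R, (exists2 v, v \in V & y v != 0) /\ dist_eigen_eq V E lam y.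

Definition dist_spectral_radius (V : {set T}) (E : {set {set T}}) (rho : R) :=
  dist_eigenvalue V E rho /\ forall lam, dist_eigenvalue V E lam -> lam <= rho.

Definition perron_vector (V : {set T}) (E : {set {set T}}) (x : T -> R) :=
  exists rho, [/\ dist_spectral_radius V E rho, dist_eigen_eq V E rho x,
                  (forall v, v \in V -> 0 < x v) &
                  \sum_(v in V) x v ^+ 2 = 1].

Definition sigma (x : T -> R) (X : {set T}) : R := \sum_(v in X) x v.
End Hyper.

(* Carrier type: path vertices u_0..u_n (n = s+t), the k-2 inner       *)
(* vertices (i,j) of each path edge e_(i+1), i < n (index n unused),  *)
(* the k-1 non-center vertices of each of  *)
(* the c edges of the hyperstar attached at u_i, and the vertices of   *)
(* G_{r_s} (with r_s identified with u_s).                              *)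
Section Construction.
Variables (k c s t : nat) (W : finType) (EG : {set {set W}}) (r : W).

Definition carrier : finType :=
  (('I_(s + t).+1 + ('I_(s + t).+1 * 'I_(k - 2))) +
   (('I_(s + t).+1 * 'I_c * 'I_(k - 1)) + W))%type.

Definition uu (i : nat) : carrier := inl (inl (@inord (s + t) i)).

(* indices carrying a hyperstar: {1,...,s+t-1} \ {s} *)
Definition star_ok (i : nat) : bool := [&& 0 < i, i < s + t & i != s].

Definition valid (x : carrier) : bool :=
  match x with
  | inl (inl _) => true
  | inl (inr (i, _)) => (i < s + t)%N
  | inr (inl (i, _, _)) => star_ok i
  | inr (inr w) => w != r
  end.

Definition VH : {set carrier} := [set x | valid x].

Definition pedge (m : nat) : {set carrier} :=
  [set uu m.-1; uu m] :|:
  [set (inl (inr (@inord (s + t) m.-1, j)) : carrier) | j : 'I_(k - 2)].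


Definition sedge (i : 'I_(s + t).+1) (a : 'I_c) : {set carrier} :=
  [set uu i] :|: [set (inr (inl (i, a, b)) : carrier) | b : 'I_(k - 1)].

Definition emb (w : W) : carrier := if w == r then uu s else inr (inr w).

Definition EH : {set {set carrier}} :=
  [set pedge i.+1 | i : 'I_(s + t)] :|:
  [set sedge ia.1 ia.2 | ia in [set ia : 'I_(s + t).+1 * 'I_c | star_ok ia.1]] :|:
  [set emb @: e | e : {set W} in EG].

(* V(G_{u_i}): u_i together with the hypergraph attached at u_i *)
Definition Gat (i : nat) : {set carrier} :=
  if i == s then emb @: [set: W]
  else if star_ok i then
    [set uu i] :|: [set (inr (inl (@inord (s + t) i, a, b)) : carrier)
                     | a : 'I_c, b : 'I_(k - 1)]
  else [set uu i].

(* H^{u_i}: component of H - e_{i+1} containing u_0 *)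
Definition Hup (i : nat) : {set carrier} := component (EH :\ pedge i.+1) (uu 0).
(* H_{u_i}: component of H - e_i containing u_{s+t} *)
Definition Hdown (i : nat) : {set carrier} := component (EH :\ pedge i) (uu (s + t)).

Definition Vup' (i : nat) : {set carrier} := Hup i :\: Gat i.
Definition Vdown' (i : nat) : {set carrier} := Hdown i :\: Gat i.
End Construction.

From Pilot Require Import Defs.
From HB Require Import structures.
From mathcomp Require Import all_boot all_order all_algebra.
From mathcomp Require Import zify ring lra.
Set Implicit Arguments. Unset Strict Implicit. Unset Printing Implicit Defensive.
Import Order.TTheory GRing.Theory Num.Theory.

(* Place u_i at level 2i, the inner vertices of e_(i+1) at level 2i+1 and
   everything hanging at u_i at level 2i.  Every u_i is a cut vertex, so
   comparing the eigen-equations of neighbouring vertices turns distance sums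
   into masses of levels: writing B q for the x-mass of the levels below q and
   T for the total mass, rho (x_(u_i) - x_(u_(i+1))) = T - B (2i+2) - B (2i+1),
   and the masses of an inner level and of a star level are explicit in
   x_(u_i), B and T.  Compare the two sides of u_s symmetrically: the gap
   h_j = x_(u_(s+j)) - x_(u_(s-j)) and the excess
   E_j = B (2(s-j)+1) - T + B (2(s+j)) satisfy a linear recurrence along which
   "h_j <= 0 and E_j < 0" propagates.  As E_t + h_t >= 0 at the far end, E_0
   is nonnegative, which is the second inequality; the first follows since
   B (2s+3) >= B (2s+1) + x_(u_(s+1)) and x_(u_s) > 0. *)

Section HypergraphDistance.
Variables (T : finType) (E : {set {set T}}).
Implicit Types (u v w y z : T) (X : pred T).

Lemma adj_sym : symmetric (adj E).
Proof.
by move=> y z; apply/existsP/existsP=> -[e /and3P[He Hy Hz]]; exists e; rewrite He Hy Hz.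
Qed.

Lemma adj_edge e y z : e \in E -> y \in e -> z \in e -> adj E y z.
Proof. by move=> He Hy Hz; apply/existsP; exists e; rewrite He Hy Hz. Qed.

Lemma adjP y z : adj E y z -> exists e, [/\ e \in E, y \in e & z \in e].
Proof. by case/existsP=> e /and3P[He Hy Hz]; exists e. Qed.

Lemma nstep_adj y z : adj E y z -> nstep E y z 1.
Proof. by move=> Hyz; apply/existsP; exists z; rewrite Hyz /=. Qed.

Lemma nstep_cat u v w m1 m2 :
  nstep E u v m1 -> nstep E v w m2 -> nstep E u w (m1 + m2).
Proof.
elim: m1 u => [|m1 IH] u /=; first by move/eqP->.
by case/existsP=> y /andP[Huy Hy] Hw; apply/existsP; exists y; rewrite Huy IH.
Qed.

Lemma nstep_path u p : path (adj E) u p -> nstep E u (last u p) (size p).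
Proof.
elim: p u => [|y p IH] u //= /andP[Huy Hp].
by apply/existsP; exists y; rewrite Huy IH.
Qed.

Lemma nstepP u v m : nstep E u v m ->
  exists p, [/\ size p = m, path (adj E) u p & last u p = v].
Proof.
elim: m u => [|m IH] u /=; first by move/eqP->; exists [::].
case/existsP=> y /andP[Huy /IH[p [<- Hp <-]]].
by exists (y :: p); rewrite /= Huy Hp.
Qed.

Lemma connect_nstep u v : connect (adj E) u v -> exists m, nstep E u v m.
Proof. by case/connectP=> p Hp ->; exists (size p); exact: nstep_path. Qed.

(* A shortest walk is a path, so it has fewer than #|T| edges. *)
Lemma nstep_small u v m : nstep E u v m -> exists2 m', m' < #|T| & nstep E u v m'.
Proof.
case/nstepP=> p [_ /shortenP[p' Hp' Hu _] <-].
exists (size p'); last exact: nstep_path.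
by have := max_card (mem (u :: p')); rewrite (card_uniqP Hu).
Qed.

Lemma dist_leq u v m : nstep E u v m -> dist E u v <= m.
Proof.
move=> Huv; have [Hm|Hm] := leqP m #|T|.
  by have := @bigmin_le_cond _ nat _ #|T| (Ordinal (Hm : m < #|T|.+1))
    (fun i => nstep E u v i) val Huv; rewrite minEnat.
apply: leq_trans (ltnW Hm); rewrite /dist.
by apply: (big_ind (fun d => d <= #|T|)) => // [a b Ha _|i _]; rewrite ?geq_min ?Ha // -ltnS.
Qed.

Lemma nstep_dist u v : (exists m, nstep E u v m) -> nstep E u v (dist E u v).
Proof.
case=> m /nstep_small[m' Hm' /dist_leq Hd].
have : dist E u v < #|T| by apply: leq_ltn_trans Hd Hm'.
rewrite /dist; apply: (big_ind (fun d => d < #|T| -> nstep E u v d)) => //.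
  by rewrite ltnn.
by move=> a b Ha Hb; rewrite /minn; case: ifP.
Qed.

Lemma dist_xx u : dist E u u = 0.
Proof. by apply/eqP; rewrite -leqn0; exact: (@dist_leq u u 0 (eqxx u)). Qed.

Lemma dist_adj y z : adj E y z -> y != z -> dist E y z = 1.
Proof.
move=> /nstep_adj Hyz Hne; have := dist_leq Hyz.
have := nstep_dist (ex_intro _ 1 Hyz); case: (dist E y z) => [|[|]] //=.
by move/eqP=> Heq; rewrite Heq eqxx in Hne.
Qed.

Lemma dist_edge e y z : e \in E -> y \in e -> z \in e -> y != z -> dist E y z = 1.
Proof. by move=> He Hy Hz; apply/dist_adj/(adj_edge He). Qed.

Section CutVertex.
Variables (X : pred T) (a : T).
Hypothesis cutX : forall y z, adj E y z -> X y -> ~~ X z -> z = a.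

Lemma nstep_cut v w m : X v -> ~~ X w -> nstep E v w m ->
  exists m1 m2, [/\ m = m1 + m2, nstep E v a m1 & nstep E a w m2].
Proof.
elim: m v => [|m IH] v Xv Xw /=; first by move/eqP=> Hvw; rewrite -Hvw Xv in Xw.
case/existsP=> y /andP[Hvy Hy]; case Xy: (X y).
  have [m1 [m2 [-> H1 H2]]] := IH y Xy Xw Hy.
  by exists m1.+1, m2; split=> //; apply/existsP; exists y; rewrite Hvy.
rewrite -(cutX Hvy Xv (negbT Xy)).
by exists 1, m; split=> //; exact: nstep_adj.
Qed.

Lemma dist_cut v w : X v -> ~~ X w ->
  connect (adj E) v a -> connect (adj E) a w -> dist E v w = dist E v a + dist E a w.
Proof.
move=> Xv Xw /connect_nstep/nstep_dist Hva /connect_nstep/nstep_dist Haw.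
have Hvw := nstep_cat Hva Haw.
apply/eqP; rewrite eqn_leq dist_leq //=.
have [m1 [m2 [-> /dist_leq H1 /dist_leq H2]]] :=
  nstep_cut Xv Xw (nstep_dist (ex_intro (nstep E v w) _ Hvw)).
exact: leq_add.
Qed.

End CutVertex.

Lemma connect_closed (P : pred T) u v :
  (forall y z, adj E y z -> P y -> P z) -> P u -> connect (adj E) u v -> P v.
Proof.
move=> HP Pu /connectP[p Hp ->]; elim: p u Pu Hp => [|y p IH] u Pu //=.
by case/andP=> Huy; apply: IH; exact: HP Huy Pu.
Qed.

Lemma component_eq u (P : pred T) :
  (forall y z, adj E y z -> P y -> P z) -> P u ->
  (forall y, P y -> connect (adj E) u y) -> component E u = [set y | P y].
Proof.
move=> HP Pu Hconn; apply/setP=> y; rewrite !inE; apply/idP/idP; last exact: Hconn.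
exact: connect_closed.
Qed.

End HypergraphDistance.

Lemma connect_adj_map (T T' : finType) (E : {set {set T}}) (E' : {set {set T'}})
    (f : T -> T') u v :
  (forall e, e \in E -> f @: e \in E') ->
  connect (adj E) u v -> connect (adj E') (f u) (f v).
Proof.
move=> HE /connectP[p Hp ->]; elim: p u Hp => [|y p IH] u //= /andP[Huy Hp].
apply: connect_trans (IH _ Hp); apply: connect1.
by case/adjP: Huy => e [He Hu Hy]; apply: (adj_edge (HE e He)); exact: imset_f.
Qed.

Section BalanceRecurrence.
Variable R : realFieldType.
Local Open Scope ring_scope.

Lemma balance_step_neg (rho K D mu h h' E E' dl : R) :
  0 < rho -> 0 <= K -> K < D -> 0 <= mu -> h <= 0 -> E < 0 ->
  rho * (h' - h) = 2 * E' + dl -> D * dl = - (K * rho * (h' + h)) ->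
  E - E' = dl - mu * h ->
  h' < 0 /\ E' < 0.
Proof.
move=> Hr HK HKD Hm Hh HE Hb Hc Hd.
have HD : 0 < D by lra.
have HDK : 0 < rho * (D - K) by apply: mulr_gt0; lra.
have Eh' : rho * (D + K) * h' = rho * (D - K) * h + 2 * D * E'.
  by have := congr1 ( *%R D) Hb; rewrite /=; lra.
have EE' : D * E' = D * E + D * mu * h + K * rho * (h' + h).
  by have := congr1 ( *%R D) Hd; rewrite /=; lra.
have EE'2 : D * E' * (rho * (D - K)) =
    rho * (D + K) * (D * E + D * mu * h + K * rho * h) + K * rho * (rho * (D - K) * h).
  have := congr1 ( *%R (rho * (D + K))) EE'; have := congr1 ( *%R (K * rho)) Eh'.
  rewrite /=; lra.
have HE' : E' < 0.
  have DE : D * E < 0 by rewrite pmulr_rlt0.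
  have Dmh : D * mu * h <= 0 by apply: mulr_ge0_le0 => //; apply: mulr_ge0; lra.
  have Krh : K * rho * h <= 0 by apply: mulr_ge0_le0 => //; apply: mulr_ge0; lra.
  have Krrh : K * rho * (rho * (D - K) * h) <= 0.
    by apply: mulr_ge0_le0; [apply: mulr_ge0; lra | apply: mulr_ge0_le0; lra].
  have : rho * (D + K) * (D * E + D * mu * h + K * rho * h) < 0.
    by rewrite pmulr_rlt0 ?mulr_gt0 //; lra.
  by move=> ?; rewrite -(pmulr_rlt0 _ HD) -(pmulr_llt0 _ HDK); lra.
split=> //.
have : rho * (D + K) * h' < 0.
  rewrite Eh'; have : rho * (D - K) * h <= 0 by apply: mulr_ge0_le0; lra.
  have : 2 * D * E' < 0 by rewrite pmulr_rlt0 ?mulr_gt0.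
  lra.
by rewrite pmulr_rlt0 // mulr_gt0 //; lra.
Qed.

Lemma balance_recurrence_ge0 (rho K D mu : R) (t : nat) (h E dl : nat -> R) :
  0 < rho -> 0 <= K -> K < D -> 0 <= mu -> h 0%N = 0 ->
  (forall j, (j < t)%N -> rho * (h j.+1 - h j) = 2 * E j.+1 + dl j.+1) ->
  (forall j, (j < t)%N -> D * dl j.+1 = - (K * rho * (h j.+1 + h j))) ->
  (forall j, (j < t)%N -> E j - E j.+1 = dl j.+1 - mu * h j) ->
  0 <= E t + h t -> 0 <= E 0%N.
Proof.
move=> Hr HK HKD Hm h0 Hb Hc Hd Ht; rewrite leNgt; apply/negP=> E0.
have neg j : (j <= t)%N -> h j <= 0 /\ E j < 0.
  elim: j => [|j IH] Hj; first by rewrite h0.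
  have [hj Ej] := IH (ltnW Hj).
  have [] := balance_step_neg Hr HK HKD Hm hj Ej (Hb j Hj) (Hc j Hj) (Hd j Hj).
  by split=> //; exact: ltW.
by have [] := neg t (leqnn t); lra.
Qed.

End BalanceRecurrence.

Section Gcst.
Variables (k c s t : nat) (W : finType) (EG : {set {set W}}) (r : W).

Local Notation n := (s + t).
Local Notation V := (carrier k c s t W).
Local Notation u := (uu k c s t W).
Local Notation EH := (EH k c s t EG r).
Local Notation VH := (VH k c s t r).
Local Notation pedge := (pedge k c s t W).
Local Notation sedge := (@sedge k c s t W).
Local Notation emb := (emb k c s t r).
Local Notation valid := (@valid k c s t W r).
Local Notation star_ok := (star_ok s t).

Definition inner (i : nat) (j : 'I_(k - 2)) : V := inl (inr (inord i, j)).
Definition leaf (i : nat) (a : 'I_c) (b : 'I_(k - 1)) : V := inr (inl (inord i, a, b)).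

Definition level (y : V) : nat :=
  match y with
  | inl (inl i) => 2 * i
  | inl (inr (i, _)) => (2 * i).+1
  | inr (inl (i, _, _)) => 2 * i
  | inr (inr _) => 2 * s
  end.

Lemma u_val (i : 'I_n.+1) : u i = inl (inl i).
Proof. by rewrite /uu inord_val. Qed.

Lemma u_inj i j : i <= n -> j <= n -> u i = u j -> i = j.
Proof. by move=> Hi Hj [] /(congr1 val); rewrite /= !inordK. Qed.

Lemma u_neq i j : i <= n -> j <= n -> i != j -> u i != u j.
Proof. by move=> Hi Hj; apply: contra => /eqP/u_inj-> //. Qed.

Lemma emb_r : emb r = u s.
Proof. by rewrite /Defs.emb eqxx. Qed.

Lemma level_u i : i <= n -> level (u i) = 2 * i.
Proof. by move=> Hi; rewrite /= inordK. Qed.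

Lemma level_inner i j : i < n -> level (inner i j) = (2 * i).+1.
Proof. by move=> Hi; rewrite /= inordK // ltnW. Qed.

Lemma level_emb w : level (emb w) = 2 * s.
Proof. by rewrite /Defs.emb; case: eqP => //= _; rewrite inordK //; lia. Qed.

Lemma star_okP i : star_ok i -> [/\ 0 < i, i < n & i != s].
Proof. by case/and3P. Qed.

Lemma level_leaf i a b : star_ok i -> level (leaf i a b) = 2 * i.
Proof. by case/star_okP=> _ Hi _; rewrite /= inordK // ltnW. Qed.

Variant vertex_spec : V -> Prop :=
  | PathVertex i of i <= n : vertex_spec (u i)
  | InnerVertex i j of i < n : vertex_spec (inner i j)
  | LeafVertex i a b of star_ok i : vertex_spec (leaf i a b)
  | GVertex w of w != r : vertex_spec (emb w).

Lemma validP y : valid y -> vertex_spec y.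
Proof.
case: y => [[i|[i j]]|[[[i a] b]|w]] /= Hy.
- by rewrite -u_val; apply: PathVertex; rewrite -ltnS.
- by have := InnerVertex j Hy; rewrite /inner inord_val.
- by have := LeafVertex a b Hy; rewrite /leaf inord_val.
- by have := GVertex Hy; rewrite /Defs.emb (negbTE Hy).
Qed.

Lemma valid_u i : valid (u i).
Proof. by []. Qed.

Lemma valid_inner i j : i < n -> valid (inner i j).
Proof. by move=> Hi; rewrite /= inordK //; lia. Qed.

Lemma valid_leaf i a b : star_ok i -> valid (leaf i a b).
Proof. by move=> Hi; have [_ Hn _] := star_okP Hi; rewrite /= inordK //; lia. Qed.

Lemma level_valid y : valid y -> level y <= 2 * n.
Proof.
case/validP=> [i Hi|i j Hi|i a b Hi|w _];
  rewrite ?level_u ?level_inner ?level_leaf ?level_emb //; try lia.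
by have [_ Hin _] := star_okP Hi; lia.
Qed.

Lemma inner_inj i j j' : inner i j = inner i j' -> j = j'.
Proof. by case. Qed.

Lemma leaf_inj i a b b' : leaf i a b = leaf i a b' -> b = b'.
Proof. by case. Qed.

Lemma pedgeP m y : y \in pedge m ->
  [\/ y = u m.-1, y = u m | exists j, y = inner m.-1 j].
Proof.
rewrite !inE => /orP[/orP[/eqP->|/eqP->]|/imsetP[j _ ->]]; first by constructor 1.
  by constructor 2.
by constructor 3; exists j.
Qed.

Lemma pedge_ul m : u m.-1 \in pedge m.
Proof. by rewrite !inE eqxx. Qed.

Lemma pedge_ur m : u m \in pedge m.
Proof. by rewrite !inE eqxx orbT. Qed.

Lemma pedge_inner i j : inner i j \in pedge i.+1.
Proof. by rewrite !inE; apply/orP; right; apply/imsetP; exists j. Qed.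

Lemma sedgeP (i : 'I_n.+1) a y : y \in sedge i a -> y = u i \/ exists b, y = leaf i a b.
Proof.
rewrite !inE => /orP[/eqP->|/imsetP[b _ ->]]; first by left.
by right; exists b; rewrite /leaf inord_val.
Qed.

Lemma sedge_u i a : i <= n -> u i \in sedge (inord i) a.
Proof. by move=> Hi; rewrite !inE /uu inordK ?eqxx. Qed.

Lemma sedge_leaf i a b : leaf i a b \in sedge (inord i) a.
Proof. by rewrite !inE; apply/orP; right; apply/imsetP; exists b. Qed.

Lemma EHP e : e \in EH ->
  [\/ exists i : 'I_n, e = pedge i.+1,
      exists2 ia : 'I_n.+1 * 'I_c, star_ok ia.1 & e = sedge ia.1 ia.2
    | exists2 e', e' \in EG & e = emb @: e'].
Proof.
rewrite !inE => /orP[/orP[]|].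
- by case/imsetP=> i _ ->; constructor 1; exists i.
- by case/imsetP=> ia; rewrite inE => Hia ->; constructor 2; exists ia.
- by case/imsetP=> e' He' ->; constructor 3; exists e'.
Qed.

Lemma pedge_EH i : i < n -> pedge i.+1 \in EH.
Proof.
by move=> Hi; rewrite !inE; apply/orP; left; apply/orP; left; apply/imsetP; exists (Ordinal Hi).
Qed.

Lemma sedge_EH i a : star_ok i -> sedge (inord i) a \in EH.
Proof.
move=> Hi; have [_ Hin _] := star_okP Hi.
rewrite !inE; apply/orP; left; apply/orP; right; apply/imsetP.
by exists (inord i, a); rewrite // inE /= inordK //; lia.
Qed.

Lemma emb_EH e : e \in EG -> emb @: e \in EH.
Proof. by move=> He; rewrite !inE; apply/orP; right; apply/imsetP; exists e. Qed.

Lemma edge_valid e y : e \in EH -> y \in e -> valid y.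
Proof.
case/EHP=> [[i ->]|[[i a] /= Hi ->]|[e' _ ->]].
- by case/pedgeP=> [->|->|[j ->]] //; exact: valid_inner (ltn_ord i).
- by case/sedgeP=> [->|[b ->]] //; exact: valid_leaf.
- by case/imsetP=> w _ ->; rewrite /Defs.emb; case: eqP => //= /eqP.
Qed.

Lemma edge_levels e y z : e \in EH -> y \in e -> z \in e -> level y < level z ->
  exists i, [/\ i < n, e = pedge i.+1, 2 * i <= level y, level z <= 2 * i + 2
   & (y = u i \/ level y = (2 * i).+1) /\ (z = u i.+1 \/ level z = (2 * i).+1)].
Proof.
case/EHP=> [[i ->]|[[i a] /= _ ->]|[e' _ ->]].
- have Hi := ltn_ord i.
  have Lu := level_u (ltnW Hi); have Lu1 := level_u Hi.
  have Lin j := level_inner j Hi.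
  case/pedgeP=> [->|->|[j ->]]; case/pedgeP=> [->|->|[j' ->]];
    rewrite ?Lu ?Lu1 ?Lin => Hlt; try lia; exists i.
  + by split; [| |lia|lia|split; left].
  + by split; [| |lia|lia|split; [left|right]].
  + by split; [| |lia|lia|split; [right|left]].
- by case/sedgeP=> [->|[b ->]]; case/sedgeP=> [->|[b' ->]];
    rewrite ?u_val /= /leaf ?inord_val /=; lia.
- by case/imsetP=> w _ -> /imsetP[w' _ ->]; rewrite !level_emb; lia.
Qed.

Definition leaves i a : {set V} := [set leaf i a b | b : 'I_(k - 1)].

Lemma leaf_adj i a b z : i <= n -> adj EH (leaf i a b) z ->
  z = u i \/ exists b', z = leaf i a b'.
Proof.
move=> Hi /adjP[e [He Hy Hz]]; move: He Hy Hz.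
case/EHP=> [[i0 ->]|[[i0 a0] /= _ ->]|[e' _ ->]].
- by case/pedgeP=> [||[]].
- case/sedgeP=> [//|[b0 [Ei -> _]]].
  have -> : i0 = inord i by rewrite Ei inord_val.
  case/sedgeP=> [->|[b' ->]]; [left|right]; first by rewrite /uu inordK.
  by exists b'; rewrite /leaf !inordK.
- by case/imsetP=> w _; rewrite /Defs.emb; case: eqP.
Qed.

Lemma cut_below i : i < n -> forall y z, adj EH y z ->
  (2 * i).+1 <= level y -> ~~ ((2 * i).+1 <= level z) -> z = u i.
Proof.
move=> Hi y z /adjP[e [He Hy Hz]] Ly; rewrite -ltnNge => Lz.
have [i' [_ _ L1 L2 [[->|Lz'] _]]] := edge_levels He Hz Hy (leq_trans Lz Ly); last lia.
by have -> : i = i' by lia.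
Qed.

Lemma cut_above i : i < n -> forall y z, adj EH y z ->
  level y <= (2 * i).+1 -> ~~ (level z <= (2 * i).+1) -> z = u i.+1.
Proof.
move=> Hi y z /adjP[e [He Hy Hz]] Ly; rewrite -ltnNge => Lz.
have [i' [_ _ L1 L2 [_ [->|Lz']]]] := edge_levels He Hy Hz (leq_ltn_trans Ly Lz); last lia.
by have -> : i = i' by lia.
Qed.

Lemma cut_leaves i a : i <= n -> forall y z, adj EH y z ->
  y \in leaves i a -> z \notin leaves i a -> z = u i.
Proof.
move=> Hi y z Hyz /imsetP[b _ Ey] Hz; move: Hyz; rewrite Ey.
case/(leaf_adj Hi)=> [//|[b' Ez]].
by move: Hz; rewrite Ez imset_f.
Qed.

Hypothesis hcon : hconnected [set: W] EG.

Lemma connect_levels (E' : {set {set V}}) lo hi : lo <= hi <= n ->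
  (forall i, lo <= i < hi -> pedge i.+1 \in E') ->
  (forall i a, star_ok i -> lo <= i <= hi -> sedge (inord i) a \in E') ->
  (lo <= s <= hi -> forall e, e \in EG -> emb @: e \in E') ->
  forall y, valid y -> 2 * lo <= level y <= 2 * hi -> connect (adj E') (u lo) y.
Proof.
move=> Hlh HP HS HG.
have Hpath i : lo <= i <= hi -> connect (adj E') (u lo) (u i).
  elim: i => [|i IH] Hi; first by have -> : lo = 0 by lia.
  have [->|Hlo] := eqVneq lo i.+1; first exact: connect0.
  apply: connect_trans (IH _) (connect1 _); first lia.
  by apply: (adj_edge (HP i _)); [lia|exact: pedge_ul|exact: pedge_ur].
move=> y; case/validP=> [i Hi|i j Hi|i a b Hi|w Hw].
- by rewrite level_u // => Hl; apply: Hpath; lia.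
- rewrite level_inner //.
  move=> Hl; apply: connect_trans (Hpath i _) (connect1 _); first lia.
  by apply: (adj_edge (HP i _)); [lia|exact: pedge_ul|exact: pedge_inner].
- have [_ Hin _] := star_okP Hi.
  rewrite level_leaf //.
  move=> Hl; apply: connect_trans (Hpath i _) (connect1 _); first lia.
  apply: (adj_edge (HS i a Hi _)); [lia|apply: sedge_u; lia|exact: sedge_leaf].
- rewrite level_emb => Hl; apply: connect_trans (Hpath s _) _; first lia.
  rewrite -emb_r; apply: connect_adj_map; last by apply: hcon; rewrite inE.
  by apply: HG; lia.
Qed.

Lemma connect_valid y z : valid y -> valid z -> connect (adj EH) y z.
Proof.
have Hu0 y' : valid y' -> connect (adj EH) (u 0) y'.
  move=> Vy; apply: (@connect_levels EH 0 n) => //; last by rewrite level_valid.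
  - by rewrite leqnn.
  - by move=> i /andP[_ Hi]; apply: pedge_EH.
  - by move=> i a Hi _; apply: sedge_EH.
  - by move=> _ e He; apply: emb_EH.
move=> Vy Vz; apply: connect_trans (Hu0 z Vz).
by rewrite (sym_connect_sym (@adj_sym _ EH)); exact: Hu0.
Qed.

Lemma pedge_neq i m : i < n -> 0 < m <= n -> i.+1 != m -> pedge i.+1 != pedge m.
Proof.
move=> Hi Hm Hne; apply/negP=> /eqP Heq.
have := pedge_ul i.+1; have := pedge_ur i.+1; rewrite Heq.
case/pedgeP=> [E1|E1|[? //]]; move/u_inj: E1 => E1;
case/pedgeP=> [E2|E2|[? //]]; move/u_inj: E2 => E2; lia.
Qed.

Lemma flat_neq_pedge (e : {set V}) m : 0 < m <= n ->
  (forall y z, y \in e -> z \in e -> level y = level z) -> e != pedge m.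
Proof.
move=> Hm Hflat; apply/negP=> /eqP Heq.
move: Hflat; rewrite Heq => /(_ _ _ (pedge_ul m) (pedge_ur m)); rewrite !level_u; lia.
Qed.

Lemma sedge_neq_pedge (i : 'I_n.+1) a m : 0 < m <= n -> sedge i a != pedge m.
Proof.
move=> Hm; apply: flat_neq_pedge => // y z.
by do 2![case/sedgeP=> [->|[? ->]]]; rewrite ?u_val /= /leaf ?inord_val.
Qed.

Lemma emb_neq_pedge (e : {set W}) m : 0 < m <= n -> emb @: e != pedge m.
Proof.
by move=> Hm; apply: flat_neq_pedge => // y z /imsetP[? _ ->] /imsetP[? _ ->]; rewrite !level_emb.
Qed.

Lemma Hup_eq i : i < n -> Hup k c s t EG r i = [set y | valid y && (level y <= 2 * i)].
Proof.
move=> Hi; apply: component_eq; last 2 first.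
- by rewrite /= inordK.
- move=> y /andP[Vy Ly]; apply: (@connect_levels _ 0 i) => //; try lia.
  + by move=> j Hj; rewrite in_setD1 pedge_EH ?pedge_neq //; lia.
  + by move=> j a Hj _; rewrite in_setD1 sedge_neq_pedge ?sedge_EH //; lia.
  + by move=> _ e He; rewrite in_setD1 emb_EH ?emb_neq_pedge //; lia.
move=> y z /adjP[e [He Hy Hz]] /andP[Vy Ly]; move: He; rewrite in_setD1 => /andP[Hne He].
rewrite (edge_valid He Hz) /=; case: (leqP (level z) (level y)) => Lyz; first lia.
have [i' [_ Ee L1 L2 _]] := edge_levels He Hy Hz Lyz.
rewrite leqNgt; apply/negP => Lz; have Ei : i' = i by lia.
by rewrite Ee Ei eqxx in Hne.
Qed.

Lemma Hdown_eq m : 0 < m <= n ->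
  Hdown k c s t EG r m = [set y | valid y && (2 * m <= level y)].
Proof.
move=> Hm; have Hconn y : valid y -> 2 * m <= level y ->
    connect (adj (EH :\ pedge m)) (u m) y.
  move=> Vy Ly; apply: (@connect_levels _ m n) => //; try lia.
  - by move=> j Hj; rewrite in_setD1 pedge_EH ?pedge_neq //; lia.
  - by move=> j a Hj _; rewrite in_setD1 sedge_neq_pedge ?sedge_EH.
  - by move=> _ e He; rewrite in_setD1 emb_EH ?emb_neq_pedge.
  - by rewrite Ly level_valid.
apply: component_eq; last 2 first.
- by rewrite level_u //=; lia.
- move=> y /andP[Vy Ly]; apply: connect_trans (Hconn y Vy Ly).
  by rewrite (sym_connect_sym (@adj_sym _ _)); apply: Hconn; rewrite // level_u //; lia.
move=> y z /adjP[e [He Hy Hz]] /andP[Vy Ly]; move: He; rewrite in_setD1 => /andP[Hne He].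
rewrite (edge_valid He Hz) /=; case: (leqP (level y) (level z)) => Lyz; first lia.
have [i' [_ Ee L1 L2 _]] := edge_levels He Hz Hy Lyz.
rewrite leqNgt; apply/negP => Lz; have Ei : i'.+1 = m by lia.
by rewrite Ee Ei eqxx in Hne.
Qed.

Lemma Gat_level m y : m <= n -> valid y -> (y \in Gat k c s t r m) = (level y == 2 * m).
Proof.
move=> Hm Vy; rewrite /Gat; have [->|Hms] := eqVneq m s.
  apply/imsetP/eqP=> [[w _ ->]|]; first exact: level_emb.
  case/validP: Vy => [i Hi|i j Hi|i a b Hi|w _]; rewrite ?level_u ?level_inner ?level_leaf //.
  - by move=> Li; exists r => //; rewrite emb_r; congr u; lia.
  - lia.
  - by have [_ _ /eqP] := star_okP Hi; lia.
  - by exists w.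
case: ifP => Hok; rewrite !inE.
  apply/idP/eqP=> [/orP[/eqP->|/imset2P[a b _ _ ->]]|]; first exact: level_u.
    by rewrite -/(leaf m a b) level_leaf.
  case/validP: Vy => [i Hi|i j Hi|i a b Hi|w _]; rewrite ?level_u ?level_inner ?level_leaf
    ?level_emb //.
  - by move=> Li; apply/orP; left; apply/eqP; congr u; lia.
  - lia.
  - have [_ Hin _] := star_okP Hi.
    by move=> Li; apply/orP; right; apply/imset2P; exists a b => //; congr leaf; lia.
  - lia.
apply/eqP/eqP=> [->|]; first exact: level_u.
case/validP: Vy => [i Hi|i j Hi|i a b Hi|w _]; rewrite ?level_u ?level_inner ?level_leaf
  ?level_emb //.
- by move=> Li; congr u; lia.
- lia.
- move=> Li; suff Ei : i = m by rewrite Ei Hok in Hi.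
  lia.
- lia.
Qed.

Lemma Vup'_eq i : i < n -> Vup' k c s t EG r i = [set y | valid y && (level y < 2 * i)].
Proof.
move=> Hi; apply/setP=> y; rewrite /Vup' Hup_eq // !inE andbCA.
by case Vy: (valid y) => //=; rewrite Gat_level ?(ltnW Hi) // ltn_neqAle.
Qed.

Lemma Vdown'_eq m : 0 < m <= n -> Vdown' k c s t EG r m = [set y | valid y && (2 * m < level y)].
Proof.
move=> Hm; apply/setP=> y; rewrite /Vdown' Hdown_eq // !inE andbCA.
case Vy: (valid y) => //=; rewrite Gat_level //; last by case/andP: Hm.
by rewrite ltn_neqAle eq_sym.
Qed.

Lemma dist_pedge i y z : i < n -> y \in pedge i.+1 -> z \in pedge i.+1 -> y != z ->
  dist EH y z = 1.
Proof. by move/pedge_EH; exact: dist_edge. Qed.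


Section DistanceEigenvector.
Local Open Scope ring_scope.
Variables (R : rcfType) (x : V -> R) (rho : R).
Hypothesis eig : dist_eigen_eq VH EH rho x.
Hypothesis x_gt0 : forall v, v \in VH -> 0 < x v.
Local Notation d := (dist EH).

Definition below (q : nat) : R := \sum_(w in VH | (level w < q)%N) x w.
Definition total : R := \sum_(w in VH) x w.

Lemma inVH y : (y \in VH) = valid y.
Proof. by rewrite inE. Qed.

Lemma eig_compare a b (f g : V -> nat) : valid a -> valid b ->
  (forall w, valid w -> (d a w + f w = d b w + g w)%N) ->
  rho * x a + \sum_(w in VH) (f w)%:R * x w = rho * x b + \sum_(w in VH) (g w)%:R * x w.
Proof.
move=> Va Vb Hfg; rewrite -(eig (v := a)) ?inVH // -(eig (v := b)) ?inVH //.
rewrite -!big_split; apply: eq_bigr => w; rewrite inVH => Vw /=.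
by rewrite -!mulrDl -!natrD Hfg.
Qed.

Lemma sum_indicator (P : pred V) :
  \sum_(w in VH) (P w : nat)%:R * x w = \sum_(w in VH | P w) x w.
Proof. by rewrite big_mkcondr; apply: eq_bigr => w _; case: (P w); rewrite ?mul1r ?mul0r. Qed.

Lemma below_above q : \sum_(w in VH | (q < level w)%N) x w = total - below q.+1.
Proof.
have -> : total = below q.+1 + \sum_(w in VH | ~~ (level w < q.+1)%N) x w.
  by rewrite /total /below (bigID (fun w => (level w < q.+1)%N)).
by rewrite [below _ + _]addrC addrK; apply: eq_bigl => w; rewrite ltnNge.
Qed.

Lemma below_split q1 q2 : (q1 <= q2)%N ->
  below q2 = below q1 + \sum_(w in VH | (q1 <= level w < q2)%N) x w.
Proof.
move=> Hq; rewrite {1}/below (bigID (fun w => (level w < q1)%N)) /=.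
by congr (_ + _); apply: eq_bigl => w; rewrite -andbA; congr (_ && _); lia.
Qed.

Lemma below_ge0 q : 0 <= below q.
Proof. by rewrite sumr_ge0 // => w /andP[Hw _]; exact: ltW (x_gt0 Hw). Qed.

Lemma below_addr_le q1 q2 y : valid y -> (q1 <= level y < q2)%N -> below q1 + x y <= below q2.
Proof.
move=> Vy Hy; rewrite (@below_split q1 q2); last lia.
rewrite lerD2l (bigD1 y) /=; last by rewrite inVH Vy.
rewrite lerDl sumr_ge0 // => w /andP[/andP[Hw _] _]; exact: ltW (x_gt0 Hw).
Qed.

Lemma sigma_Vup' i : (i < n)%N -> sigma x (Vup' k c s t EG r i) = below (2 * i).
Proof. by move=> Hi; rewrite /sigma Vup'_eq //; apply: eq_bigl => w; rewrite !inE. Qed.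

Lemma sigma_Vdown' m : (0 < m <= n)%N ->
  sigma x (Vdown' k c s t EG r m) = total - below (2 * m).+1.
Proof.
by move=> Hm; rewrite /sigma Vdown'_eq // -below_above; apply: eq_bigl => w; rewrite !inE.
Qed.

Lemma level_inner_inv w i : valid w -> level w = (2 * i).+1 ->
  (i < n)%N /\ exists l, w = inner i l.
Proof.
case/validP=> [j Hj|j l Hj|j a b Hj|w' _];
  rewrite ?level_u ?level_inner ?level_leaf ?level_emb //; try lia.
by move=> /eq_add_S/eqP; rewrite eqn_pmul2l // => /eqP<-; split; last exists l.
Qed.

Lemma dist_split_below i v w : (i < n)%N -> valid v -> valid w ->
  ((2 * i).+1 <= level v)%N -> (level w < (2 * i).+1)%N -> d v w = (d v (u i) + d (u i) w)%N.
Proof.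
move=> Hi Vv Vw Lv Lw; apply: (dist_cut (cut_below Hi)) => //; last 2 first.
- exact: connect_valid.
- exact: connect_valid.
by rewrite -ltnNge.
Qed.

Lemma dist_split_above i v w : (i < n)%N -> valid v -> valid w ->
  (level v <= (2 * i).+1)%N -> ((2 * i).+1 < level w)%N ->
  d v w = (d v (u i.+1) + d (u i.+1) w)%N.
Proof.
move=> Hi Vv Vw Lv Lw; apply: (dist_cut (cut_above Hi)) => //; last 2 first.
- exact: connect_valid.
- exact: connect_valid.
by rewrite -ltnNge.
Qed.

Lemma path_edge_eq i : (i < n)%N ->
  rho * (x (u i) - x (u i.+1)) = total - below (2 * i).+2 - below (2 * i).+1.
Proof.
move=> Hi; have Li := level_u (ltnW Hi); have Li1 := level_u Hi.
have Hl := pedge_ul i.+1; have Hr := pedge_ur i.+1.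
have Hne : u i != u i.+1 by apply: u_neq; lia.
have Duu : d (u i) (u i.+1) = 1%N /\ d (u i.+1) (u i) = 1%N.
  by split; apply: (dist_pedge Hi); rewrite // eq_sym.
suff : rho * x (u i) + below (2 * i).+1 = rho * x (u i.+1) + (total - below (2 * i).+2).
  by rewrite mulrBr; lra.
have /= := @eig_compare (u i) (u i.+1) (fun w => (level w < (2 * i).+1)%N : nat)
  (fun w => ((2 * i).+1 < level w)%N : nat) (valid_u _) (valid_u _).
rewrite !sum_indicator below_above; apply=> w Vw.
case: (ltngtP (level w) (2 * i).+1) => Lw /=.
- by rewrite (@dist_split_below i (u i.+1) w) ?Li1 ?Duu.2 //; lia.
- by rewrite (@dist_split_above i (u i) w) ?Li ?Duu.1 //; lia.
- have [_ [l ->]] := level_inner_inv Vw Lw.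
  by rewrite !(@dist_pedge i) ?pedge_inner.
Qed.

Lemma inner_eq i j : (i < n)%N ->
  (rho + 1) * x (inner i j) = rho * x (u i) + below (2 * i).+1.
Proof.
move=> Hi; set z := inner i j.
have Lz : level z = (2 * i).+1 := level_inner j Hi.
have Li := level_u (ltnW Hi); have Vz := valid_inner j Hi.
have Hz := pedge_inner i j; have Hl := pedge_ul i.+1; have Hr := pedge_ur i.+1.
have Dzl : d z (u i) = 1%N by apply: (dist_pedge Hi).
have Dzr : d z (u i.+1) = 1%N by apply: (dist_pedge Hi).
have Dlr : d (u i) (u i.+1) = 1%N by apply: (dist_pedge Hi); rewrite // u_neq //; lia.
rewrite mulrDl mul1r.
have /= := @eig_compare z (u i) (fun w => (w == z) : nat)
  (fun w => (level w < (2 * i).+1)%N : nat) Vz (valid_u _).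
rewrite !sum_indicator (big_pred1 z) => [-> //|w /=]; last by rewrite inVH andb_idl // => /eqP->.
move=> w Vw; case: (ltngtP (level w) (2 * i).+1) => Lw /=.
- have -> : (w == z) = false by apply: contraTF Lw => /eqP->; rewrite Lz ltnn.
  by rewrite (@dist_split_below i z w) ?Lz ?Dzl //; lia.
- have -> : (w == z) = false by apply: contraTF Lw => /eqP->; rewrite Lz ltnn.
  rewrite (@dist_split_above i z w) ?Lz ?Dzr //.
  by rewrite (@dist_split_above i (u i) w) ?Li ?Dlr //; lia.
- have [_ [l ->]] := level_inner_inv Vw Lw.
  rewrite [d (u i) _](@dist_pedge i) ?pedge_inner //.
  have [->|Hne] := eqVneq (inner i l) z; first by rewrite dist_xx.
  by rewrite (@dist_pedge i) ?pedge_inner // eq_sym.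
Qed.

Definition level_mass q := below q.+1 - below q.
Definition edge_mass i := level_mass (2 * i).+1.

Lemma level_massE q : level_mass q = \sum_(w in VH | level w == q) x w.
Proof.
rewrite /level_mass (@below_split q q.+1) // addrC addKr.
by apply: eq_bigl => w; rewrite ltnS -eqn_leq eq_sym.
Qed.

Lemma edge_massE i : (i < n)%N -> edge_mass i = \sum_(j < k - 2) x (inner i j).
Proof.
move=> Hi; rewrite /edge_mass level_massE -(big_imset _ (in2W (@inner_inj i))) /=.
apply: eq_bigl => w; rewrite inVH; apply/andP/imsetP=> [[Vw /eqP Lw]|[j _ ->]].
  by have [_ [j ->]] := level_inner_inv Vw Lw; exists j.
by rewrite valid_inner // level_inner.
Qed.

Lemma edge_mass_eq i : (i < n)%N ->
  (2 * rho + 2 + (k - 2)%:R) * edge_mass i =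
  (k - 2)%:R * (rho * (x (u i) + x (u i.+1)) + total).
Proof.
move=> Hi; set K : R := (k - 2)%:R.
have Hin : (rho + 1) * edge_mass i = K * (rho * x (u i) + below (2 * i).+1).
  rewrite edge_massE // mulr_sumr (eq_bigr _ (fun j _ => inner_eq j Hi)).
  by rewrite sumr_const card_ord mulr_natl.
have := congr1 ( *%R K) (path_edge_eq Hi); rewrite /= /edge_mass /level_mass in Hin *; lra.
Qed.

Lemma sum_leaves i a : \sum_(w in leaves i a) x w = \sum_(b < k - 1) x (leaf i a b).
Proof. by rewrite big_imset // => b b' _ _; exact: leaf_inj. Qed.

Lemma leaf_eq i a b0 : star_ok i ->
  rho * x (leaf i a b0) + (\sum_(b < k - 1) x (leaf i a b) + x (leaf i a b0)) =
  rho * x (u i) + total.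
Proof.
move=> Hi; set l0 := leaf i a b0; have [_ Hin _] := star_okP Hi.
have Vl0 : valid l0 := valid_leaf a b0 Hi.
have He := sedge_EH a Hi; have Hu := sedge_u a (ltnW Hin).
have Dul b : d (u i) (leaf i a b) = 1%N by apply: (dist_edge He) => //; exact: sedge_leaf.
have S1 : \sum_(w in VH) ((w \in leaves i a) + (w == l0))%N%:R * x w =
    \sum_(b < k - 1) x (leaf i a b) + x l0.
  rewrite (eq_bigr (fun w => (w \in leaves i a)%:R * x w + (w == l0)%:R * x w)); last first.
    by move=> w _; rewrite natrD mulrDl.
  rewrite big_split !sum_indicator -sum_leaves; congr (_ + _).
    by apply: eq_bigl => w; rewrite inVH andb_idl // => /imsetP[b _ ->]; exact: valid_leaf.
  by apply: big_pred1 => w; rewrite inVH /= andb_idl // => /eqP->.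
have S2 : \sum_(w in VH) 1%N%:R * x w = total by apply: eq_bigr => w _; rewrite mul1r.
rewrite -S1 -S2; apply: eig_compare => // w Vw.
case: (boolP (w \in leaves i a)) => [/imsetP[b _ ->]|Hw].
  rewrite Dul; have [->|Hne] := eqVneq b b0; first by rewrite dist_xx eqxx.
  rewrite (dist_edge He) ?sedge_leaf //; last by apply: contra Hne => /eqP/leaf_inj->.
  by have -> : (leaf i a b == l0) = false by apply: contraNF Hne => /eqP/leaf_inj->.
have -> : (w == l0) = false by apply: contraNF Hw => /eqP->; exact: imset_f.
rewrite (dist_cut (@cut_leaves i a (ltnW Hin))) ?imset_f //; last 2 first.
- exact: connect_valid.
- exact: connect_valid.
by rewrite (dist_edge He) ?sedge_leaf // addn0 addnC.
Qed.

Lemma star_level_mass i : star_ok i ->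
  level_mass (2 * i) = x (u i) + \sum_(a < c) \sum_(b < k - 1) x (leaf i a b).
Proof.
move=> Hi; have [_ Hin Hs] := star_okP Hi.
rewrite level_massE (bigD1 (u i)); last by rewrite inVH level_u ?eqxx //; lia.
congr (_ + _); rewrite pair_big /=.
have -> : \sum_(ab : 'I_c * 'I_(k - 1)) x (leaf i ab.1 ab.2) =
    \sum_(w in [set leaf i ab.1 ab.2 | ab : 'I_c * 'I_(k - 1)]) x w.
  by rewrite big_imset // => [[a b] [a' b']] _ _ [-> ->].
apply: eq_bigl => w; rewrite inVH; apply/idP/imsetP=> [|[[a b] _ ->]]; last first.
  by rewrite valid_leaf // level_leaf // eqxx.
case/andP=> /andP[Vw Lw] Hw; move: Hw Lw.
case/validP: Vw => [j Hj|j l Hj|j a b Hj|w' _];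
  rewrite ?level_u ?level_inner ?level_leaf ?level_emb //.
- move=> Hne /eqP Lj; suff Eij : j = i by rewrite Eij eqxx in Hne.
  lia.
- lia.
- by move=> _ /eqP Lj; exists (a, b) => //; congr leaf; lia.
- move=> _ /eqP Ls; suff Eis : i = s by rewrite Eis eqxx in Hs.
  lia.
Qed.

Section Balance.
Hypotheses (hk : (0 < k)%N) (ht : (0 < t)%N) (hts : (t <= s)%N).

Lemma rho_gt0 : 0 < rho.
Proof.
have Hn : (0 < n)%N by lia.
have Hu1 : u 1 \in VH by rewrite inVH.
have : 0 < \sum_(w in VH) (d (u 0) w)%:R * x w.
  rewrite (bigD1 (u 1)) //= (dist_pedge Hn (pedge_ul 1) (pedge_ur 1)) ?u_neq //.
  rewrite mulr1n mul1r.
  rewrite ltr_pwDl ?x_gt0 // sumr_ge0 // => w /andP[Hw _].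
  by rewrite mulr_ge0 ?ler0n ?ltW ?x_gt0.
by rewrite eig ?inVH // pmulr_lgt0 ?x_gt0 ?inVH.
Qed.

Lemma star_edge_mass i a : star_ok i ->
  (rho + k%:R) * \sum_(b < k - 1) x (leaf i a b) = (k - 1)%:R * (rho * x (u i) + total).
Proof.
move=> Hi.
have : \sum_(b0 < k - 1) (rho * x (leaf i a b0) +
         (\sum_(b < k - 1) x (leaf i a b) + x (leaf i a b0))) =
       \sum_(b0 < k - 1) (rho * x (u i) + total) by apply: eq_bigr => b0 _; exact: leaf_eq.
rewrite big_split [X in _ + X = _]big_split /= -mulr_sumr 2!sumr_const card_ord.
by move=> H; rewrite mulr_natl -H -[k in k%:R](subnK hk) natrD; ring.
Qed.

Lemma star_level_eq i : star_ok i ->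
  level_mass (2 * i) = x (u i) + (c * (k - 1))%:R / (rho + k%:R) * (rho * x (u i) + total).
Proof.
move=> Hi; have Hrk : rho + k%:R != 0 by rewrite lt0r_neq0 // ltr_pwDl ?rho_gt0.
rewrite star_level_mass //; congr (_ + _).
have Sa a : \sum_(b < k - 1) x (leaf i a b) = (k - 1)%:R / (rho + k%:R) * (rho * x (u i) + total).
  by apply: (mulfI Hrk); rewrite star_edge_mass //; field.
by rewrite (eq_bigr _ (fun a _ => Sa a)) sumr_const card_ord -mulr_natl natrM; ring.
Qed.

Lemma top_level : total - below (2 * n) = x (u n).
Proof.
have -> : total = below (2 * n).+1.
  by apply: eq_bigl => w; rewrite inVH; case Vw: (valid w); rewrite //= ltnS level_valid.
rewrite -/(level_mass _) level_massE (big_pred1 (u n)) // => w /=; rewrite inVH.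
apply/idP/eqP=> [/andP[Vw /eqP Lw]|->]; last by rewrite level_u ?eqxx.
move: Lw; case/validP: Vw => [j Hj|j l Hj|j a b Hj|w' _];
  rewrite ?level_u ?level_inner ?level_leaf ?level_emb //; try lia.
- by move=> Lj; congr u; lia.
- by have [_ Hjn _] := star_okP Hj; lia.
Qed.

Definition gap j := x (u (s + j)) - x (u (s - j)).
Definition excess j := below (2 * (s - j)).+1 - total + below (2 * (s + j)).
Definition edge_gap j := edge_mass (s - j) - edge_mass (s + j).-1.

Lemma gap_step j : (j < t)%N -> rho * (gap j.+1 - gap j) = 2 * excess j.+1 + edge_gap j.+1.
Proof.
move=> Hj; rewrite /gap /excess /edge_gap /edge_mass /level_mass addnS /=.
have -> : (s - j = (s - j.+1).+1)%N by lia.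
have Ha := @path_edge_eq (s - j.+1) ltac:(lia); have Hb := @path_edge_eq (s + j) ltac:(lia).
rewrite mulnSr addn2; lra.
Qed.

Lemma edge_gap_eq j : (j < t)%N ->
  (2 * rho + 2 + (k - 2)%:R) * edge_gap j.+1 = - ((k - 2)%:R * rho * (gap j.+1 + gap j)).
Proof.
move=> Hj; rewrite /gap /edge_gap addnS /=.
have -> : (s - j = (s - j.+1).+1)%N by lia.
rewrite mulrBr !edge_mass_eq; [ring | lia | lia].
Qed.

Lemma star_level_gap j : (j < t)%N ->
  level_mass (2 * (s - j)) - level_mass (2 * (s + j)) =
  - ((1 + (c * (k - 1))%:R / (rho + k%:R) * rho) * gap j).
Proof.
move=> Hj; rewrite /gap; have [->|Hj0] := posnP j.
  by rewrite subn0 addn0 !subrr mulr0 oppr0.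
rewrite !star_level_eq; first ring.
all: by apply/and3P; split; lia.
Qed.

Lemma excess_step j : (j < t)%N ->
  excess j - excess j.+1 = edge_gap j.+1 - (1 + (c * (k - 1))%:R / (rho + k%:R) * rho) * gap j.
Proof.
move=> Hj; have := star_level_gap Hj.
rewrite /excess /edge_gap /edge_mass /level_mass addnS /=.
have -> : (s - j = (s - j.+1).+1)%N by lia.
rewrite !mulnSr !addn2; lra.
Qed.

Lemma excess_gap_end : 0 <= excess t + gap t.
Proof.
have : below 0 + x (u (s - t)) <= below (2 * (s - t)).+1.
  by apply: below_addr_le => //; rewrite level_u //; lia.
have := top_level; have := below_ge0 0; rewrite /excess /gap; lra.
Qed.

Lemma below_balance : total - below (2 * s).+1 <= below (2 * s).
Proof.
have Hr := rho_gt0.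
have HKD : (k - 2)%:R < 2 * rho + 2 + (k - 2)%:R :> R by lra.
have Hmu : 0 <= 1 + (c * (k - 1))%:R / (rho + k%:R) * rho.
  by rewrite addr_ge0 // mulr_ge0 ?divr_ge0 ?addr_ge0 // ltW.
have gap0 : gap 0 = 0 by rewrite /gap subn0 addn0 subrr.
have := balance_recurrence_ge0 Hr (ler0n _ _) HKD Hmu gap0 gap_step edge_gap_eq
  excess_step excess_gap_end.
by rewrite /excess subn0 addn0; lra.
Qed.

End Balance.
End DistanceEigenvector.
End Gcst.

Local Open Scope ring_scope.

Theorem lemma6 (R : rcfType) (k c s t : nat) (W : finType)
  (EG : {set {set W}}) (r : W) (x : carrier k c s t W -> R) :
  (2 <= k)%N -> (1 <= c)%N -> (2 <= t)%N -> (t <= s)%N ->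
  uniform k EG -> hconnected [set: W] EG ->
  perron_vector (VH k c s t r) (EH k c s t EG r) x ->
  sigma x (Vup' k c s t EG r s) + x (uu k c s t W s)
    > sigma x (Vdown' k c s t EG r s.+1) + x (uu k c s t W s.+1)
  /\ sigma x (Vup' k c s t EG r s) >= sigma x (Vdown' k c s t EG r s).
Proof.
move=> hk _ ht hts _ hcon [rho [_ eig x_gt0 _]].
have balance := below_balance hcon eig x_gt0 (ltnW hk) (ltnW ht) hts.
have xs_gt0 : 0 < x (uu k c s t W s) by apply: x_gt0; rewrite inE.
have below_s1 : below r x (2 * s).+1 + x (uu k c s t W s.+1) <= below r x (2 * s.+1).+1.
  by apply: below_addr_le => //; rewrite level_u; lia.
rewrite (sigma_Vup' r hcon) ?(sigma_Vdown' r hcon); try lia.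
split; lra.
Qed.
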